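(* Let ${\mathscr X}$ be a Hausdorff space and ${\mathscr A}$ a set of finite Borel partitions of ${\mathscr X}$, directed under refinement, that resolves ${\mathscr X}$. For any Borel probability measures $P,Q$ on ${\mathscr X}$ with $P\ll Q$ and any $L>0$, $$\|P-P\wedge LQ\|_{1}=\sup_{\alpha\in{\mathscr A}}\|P_\alpha-P_\alpha\wedge LQ_\alpha\|_{1,\alpha}=\sup_{\alpha\in{\mathscr A}}\sum_{A\in\alpha}\bigl(P(A)-LQ(A)\bigr)_+ .$$
   Context: Partitions, refinement order and ''resolves'' are as usual: a partition is a finite collection of non-empty disjoint Borel sets covering ${\mathscr X}$; ${\mathscr A}$ resolves ${\mathscr X}$ if the sets in its partitions generate the Borel $\sigma$-algebra. For measures $\mu,\nu$, $\mu\wedge\nu$ is the largest measure dominated by both (so $\|P-P\wedge LQ\|_1=\int (p-L)_+\,dQ$ with $p=dP/dQ$). For histograms $P_\alpha=(P(A))_{A\in\alpha}$, $Q_\alpha=(Q(A))_{A\in\alpha}$, $P_\alpha\wedge LQ_\alpha$ is the componentwise minimum and $\|\cdot\|_{1,\alpha}$ is the $\ell^1$-norm over $A\in\alpha$. *)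

From HB Require Import structures.
From mathcomp Require Import all_boot all_order all_algebra.
From mathcomp Require Import all_classical all_reals all_analysis.
Set Implicit Arguments. Unset Strict Implicit. Unset Printing Implicit Defensive.
Import Order.TTheory GRing.Theory Num.Theory.
Local Open Scope classical_set_scope.
Local Open Scope ring_scope.

Definition borel_space (T : ptopologicalType) := g_sigma_algebraType (@open T).

Section defs.
Context d (X : measurableType d) (R : realType).

Definition is_partition (alpha : set (set X)) : Prop :=
  [/\ finite_set alpha,
      (forall A, alpha A -> measurable A /\ A !=set0),
      (forall A B, alpha A -> alpha B -> A `&` B !=set0 -> A = B)
    & \bigcup_(A in alpha) A = setT].

Definition refines (beta alpha : set (set X)) : Prop :=
  forall B, beta B -> exists2 A, alpha A & B `<=` A.

Definition directed_partitions (AA : set (set (set X))) : Prop :=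
  [/\ AA !=set0,
      (forall alpha, AA alpha -> is_partition alpha)
    & (forall alpha beta, AA alpha -> AA beta ->
         exists2 gamma, AA gamma & refines gamma alpha /\ refines gamma beta)].

Definition resolves (AA : set (set (set X))) : Prop :=
  <<s \bigcup_(alpha in AA) alpha >> = @measurable _ X.

Definition is_measure_meet (mu nu m : set X -> \bar R) : Prop :=
  [/\ (forall A, measurable A -> (m A <= mu A)%E),
      (forall A, measurable A -> (m A <= nu A)%E)
    & (forall m' : {measure set X -> \bar R},
         (forall A, measurable A -> (m' A <= mu A)%E) ->
         (forall A, measurable A -> (m' A <= nu A)%E) ->
         forall A, measurable A -> (m' A <= m A)%E)].

Definition tv_dist (mu nu : set X -> \bar R) : \bar R :=
  ereal_sup [set x | exists2 beta, is_partition beta &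
                       x = (\sum_(B \in beta) `|mu B - nu B|)%E].

Definition hist_dist (P Q : set X -> \bar R) (L : R) (alpha : set (set X)) : \bar R :=
  (\sum_(A \in alpha) `|P A - mine (P A) (L%:E * Q A)|)%E.

End defs.

From HB Require Import structures.
From mathcomp Require Import all_boot all_order all_algebra.
From mathcomp Require Import all_classical all_reals all_analysis.
From mathcomp Require Import lra.
Set Implicit Arguments.
Unset Strict Implicit.
Unset Printing Implicit Defensive.

Import Order.TTheory GRing.Theory Num.Theory.
Local Open Scope classical_set_scope.
Local Open Scope ring_scope.

(* The Hahn decomposition [Pos], [N] of the signed measure [P - L Q] makes the meet
   explicit: [P /\ L Q = P|_N + L Q|_Pos].  For every partition, the sum over the blocks
   of [min (P A) (L Q A)] dominates [(P /\ L Q) X], so every histogram distance is at most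
   [P X - (P /\ L Q) X = ||P - P /\ L Q||].  Conversely, because [AA] is directed and
   generates the sigma-algebra, the sets [S] admitting, for every [e > 0], a union [D] of
   blocks of one partition of [AA] with [(P + Q) (D `+` S) < e] form a sigma-algebra
   containing the blocks, hence contain [N]; for such a [D] the sum of the minima is at
   most [P D + L Q (~` D)], which is close to [(P /\ L Q) X]. *)

Lemma sube_mine (R : realDomainType) (x y : \bar R) :
  x \is a fin_num -> y \is a fin_num -> (x - mine x y = maxe (x - y) 0)%E.
Proof.
case: x y => [x| |] [y| |] // _ _.
rewrite -EFin_min -EFinB -EFin_max; congr EFin.
by rewrite /Num.min /Num.max; case: (ltP x y); case: (ltP (x - y) 0); lra.
Qed.

Lemma fsumeB (R : realDomainType) (I : choiceType) (S : set I) (f g : I -> \bar R) :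
  finite_set S -> (forall i, S i -> g i \is a fin_num) ->
  (\sum_(i \in S) (f i - g i) = \sum_(i \in S) f i - \sum_(i \in S) g i)%E.
Proof.
move=> Sfin gfin; rewrite fsbig_split//; congr (_ + _)%E.
rewrite !fsbig_finite// big_seq [in RHS]big_seq fin_num_sumeN// => i.
by rewrite in_fset_set// inE => /gfin.
Qed.

Section symmetric_difference.
Context d (X : measurableType d) (R : realType).

Lemma measurableY (A B : set X) : measurable A -> measurable B -> measurable (A `+` B).
Proof. by move=> mA mB; rewrite setY_def; apply: measurableU; apply: measurableD. Qed.

Variable mu : {measure set X -> \bar R}.

Lemma measureY_triangle (A B C : set X) : measurable A -> measurable B -> measurable C ->
  (mu (A `+` C) <= mu (A `+` B) + mu (B `+` C))%E.
Proof.
move=> mA mB mC; apply: le_trans _ (measureU2 mu (measurableY mA mB) (measurableY mB mC)).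
apply: le_measure; rewrite ?inE.
- exact: measurableY.
- by apply: measurableU; apply: measurableY.
- by move=> x /=; have := EM (A x); have := EM (B x); have := EM (C x); tauto.
Qed.

Lemma measureYU (A1 A2 B1 B2 : set X) :
  measurable A1 -> measurable A2 -> measurable B1 -> measurable B2 ->
  (mu ((A1 `|` A2) `+` (B1 `|` B2)) <= mu (A1 `+` B1) + mu (A2 `+` B2))%E.
Proof.
move=> mA1 mA2 mB1 mB2.
apply: le_trans _ (measureU2 mu (measurableY mA1 mB1) (measurableY mA2 mB2)).
apply: le_measure; rewrite ?inE.
- by apply: measurableY; apply: measurableU.
- by apply: measurableU; apply: measurableY.
- move=> x /=; have := EM (A1 x); have := EM (A2 x); have := EM (B1 x).
  by have := EM (B2 x); tauto.
Qed.

End symmetric_difference.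

Section partition.
Context d (X : measurableType d) (R : realType).
Implicit Types (alpha beta : set (set X)) (D : set X).

Lemma partition_exists : exists alpha, is_partition alpha.
Proof.
have [[x _]|X0] := pselect ([set: X] !=set0).
  exists [set setT]; split; first exact: finite_set1.
  - by move=> _ ->; split; [exact: measurableT | exists x].
  - by move=> _ _ -> ->.
  - by rewrite bigcup_set1.
exists set0; split => //; rewrite bigcup_set0.
by apply/seteqP; split => // x _; apply: X0; exists x.
Qed.

Lemma fsum_partition (mu : {measure set X -> \bar R}) alpha : is_partition alpha ->
  (\sum_(A \in alpha) mu A = mu setT)%E.
Proof.
by case=> alpha_fin alpha_meas alpha_disj <-; rewrite measure_fin_bigcup// => A /alpha_meas[].
Qed.

Definition saturated alpha D := forall A, alpha A -> A `<=` D \/ A `<=` ~` D.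

Lemma saturated_refines beta alpha D :
  refines beta alpha -> saturated alpha D -> saturated beta D.
Proof.
move=> beta_alpha Dsat B /beta_alpha[A /Dsat[AD|AnD] BA].
- by left; exact: subset_trans AD.
- by right; exact: subset_trans AnD.
Qed.

Lemma saturated_block alpha A : is_partition alpha -> alpha A -> saturated alpha A.
Proof.
case=> _ _ alpha_disj _ alphaA B alphaB.
have [BA|BnA] := pselect (B `&` A !=set0).
  by left; rewrite (alpha_disj _ _ alphaB alphaA BA).
by right => x Bx Ax; apply: BnA; exists x.
Qed.

Lemma fsum_mine_le_saturated (mu nu : {measure set X -> \bar R}) alpha D :
  is_partition alpha -> measurable D -> saturated alpha D ->
  (\sum_(A \in alpha) mine (mu A) (nu A) <= mu D + nu (~` D))%E.
Proof.
move=> alphaP mD Dsat; have [alpha_fin _ _ _] := alphaP.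
have := fsum_partition (mrestr mu mD) alphaP; rewrite /= /mrestr setTI => <-.
have := fsum_partition (mrestr nu (measurableC mD)) alphaP; rewrite /= /mrestr setTI => <-.
rewrite -fsbig_split//; apply: lee_fsum => // A /Dsat[AD|AnD] /=.
- rewrite (setIidl AD) (_ : A `&` ~` D = set0); last exact/subsets_disjoint.
  by rewrite measure0 adde0 ge_min lexx.
- rewrite (setIidl AnD) (_ : A `&` D = set0); last exact/disjoints_subset.
  by rewrite measure0 add0e ge_min lexx orbT.
Qed.

Lemma measure_le_fsum_mine (mu nu : set X -> \bar R) (m : {measure set X -> \bar R}) alpha :
  is_partition alpha ->
  (forall A, measurable A -> m A <= mu A)%E -> (forall A, measurable A -> m A <= nu A)%E ->
  (m setT <= \sum_(A \in alpha) mine (mu A) (nu A))%E.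
Proof.
move=> alphaP m_mu m_nu; have [alpha_fin alpha_meas _ _] := alphaP.
rewrite -(fsum_partition m alphaP); apply: lee_fsum => // A /alpha_meas[mA _].
by rewrite le_min m_mu ?m_nu.
Qed.

Lemma tv_dist_dominated (mu : {finite_measure set X -> \bar R})
    (m : {measure set X -> \bar R}) :
  (forall A, measurable A -> m A <= mu A)%E -> tv_dist mu m = (mu setT - m setT)%E.
Proof.
move=> m_mu.
have m_fin A : measurable A -> m A \is a fin_num.
  move=> mA; rewrite ge0_fin_numE ?measure_ge0//.
  by rewrite (le_lt_trans (m_mu _ mA))// -ge0_fin_numE ?fin_num_measure.
have sumE beta : is_partition beta ->
    (\sum_(B \in beta) `|mu B - m B| = mu setT - m setT)%E.
  move=> betaP; have [beta_fin beta_meas _ _] := betaP.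
  rewrite -(fsum_partition mu betaP) -(fsum_partition m betaP) -fsumeB//; last first.
    by move=> B /beta_meas[mB _]; exact: m_fin.
  apply: eq_fsbigr => B; rewrite inE => /beta_meas[mB _].
  by rewrite gee0_abs// sube_ge0 ?m_fin ?m_mu.
rewrite /tv_dist [X in ereal_sup X](_ : _ = [set (mu setT - m setT)%E]) ?ereal_sup1//.
apply/seteqP; split => [_ [beta betaP ->]|_ ->] /=; first exact: sumE.
by have [beta betaP] := partition_exists; exists beta; rewrite ?sumE.
Qed.

End partition.

Lemma measure_bigsetU_tail d (X : measurableType d) (R : realType)
    (mu : {measure set X -> \bar R}) (F : (set X)^nat) :
  fin_num_fun mu -> (forall n, measurable (F n)) ->
  forall e : R, 0 < e -> exists n,
    (mu (\bigcup_k F k `\` \big[setU/set0]_(i < n) F i) < e%:E)%E.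
Proof.
move=> mu_fin mF e e0; set U := \bigcup_k F k.
pose T n := \big[setU/set0]_(i < n.+1) F i.
have mT n : measurable (T n) by apply: bigsetU_measurable.
have mU : measurable U by exact: bigcupT_measurable.
have TU n : T n `<=` U by rewrite /T -bigcup_mkord => x [i _ Fix]; exists i.
have T_nd : nondecreasing_seq T.
  by move=> n m nm; rewrite subsetEset; apply: subset_bigsetU; rewrite ltnS.
have muT_nd : nondecreasing_seq (mu \o T).
  by move=> n m /T_nd; rewrite subsetEset => Tnm; apply: le_measure; rewrite ?inE.
have muU : mu U = ereal_sup (range (mu \o T)).
  have := nondecreasing_cvg_mu (mu:=mu) mT _ T_nd.
  rewrite bigcup_bigsetU_bigcup => /(_ mU) muT_cvg.
  exact: cvg_unique muT_cvg (ereal_nondecreasing_cvgn muT_nd).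
have : (mu U - e%:E < ereal_sup (range (mu \o T)))%E.
  by rewrite -muU lteBlDr// lteDl ?mu_fin.
move=> /ereal_sup_gt[_ [n _ <-]] /= Tn_gt; exists n.+1.
have Tn_fin : mu (T n) \is a fin_num by apply: mu_fin.
rewrite (measureD mU (mT n)) -?ge0_fin_numE ?mu_fin// (setIidr (TU n)).
by rewrite lteBlDr// addeC -lteBlDr.
Qed.

Section approximation.
Context d (X : measurableType d) (R : realType).
Variables (AA : set (set (set X))) (mu : {measure set X -> \bar R}).
Hypotheses (AA_dir : directed_partitions AA) (mu_fin : fin_num_fun mu).

Definition approximable (S : set X) := measurable S /\
  forall e : R, 0 < e -> exists2 alpha, AA alpha &
    exists2 D, measurable D /\ saturated alpha D & (mu (D `+` S) < e%:E)%E.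

Lemma approximable_set0 : approximable set0.
Proof.
split => // e e0; have [[alpha AAalpha] _ _] := AA_dir.
exists alpha => //; exists set0; last by rewrite setYK measure0.
by split => // A _; right => x _ [].
Qed.

Lemma approximable_setC S : approximable S -> approximable (~` S).
Proof.
move=> [mS Sapp]; split => [|e /Sapp[alpha AAalpha [D [mD Dsat] DS]]].
  exact: measurableC.
exists alpha => //; exists (~` D).
  by split; [exact: measurableC | move=> A /Dsat[]; [right; rewrite setCK|left]].
suff -> : ~` D `+` ~` S = D `+` S by [].
by apply/seteqP; split => x /=; have := EM (D x); have := EM (S x); tauto.
Qed.

Lemma approximable_setU S1 S2 :
  approximable S1 -> approximable S2 -> approximable (S1 `|` S2).
Proof.
move=> [mS1 S1app] [mS2 S2app]; split => [|e e0]; first exact: measurableU.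
have e2 : 0 < e / 2 by rewrite divr_gt0.
have [alpha1 AAalpha1 [D1 [mD1 D1sat] D1S]] := S1app _ e2.
have [alpha2 AAalpha2 [D2 [mD2 D2sat] D2S]] := S2app _ e2.
have [_ _ AA_ref] := AA_dir.
have [beta AAbeta [beta_alpha1 beta_alpha2]] := AA_ref _ _ AAalpha1 AAalpha2.
exists beta => //; exists (D1 `|` D2).
  split; first exact: measurableU.
  move=> B betaB.
  have [BD1|BnD1] := saturated_refines beta_alpha1 D1sat betaB; first by left => x /BD1; left.
  have [BD2|BnD2] := saturated_refines beta_alpha2 D2sat betaB; first by left => x /BD2; right.
  by right => x Bx [/(BnD1 _ Bx)|/(BnD2 _ Bx)].
apply: le_lt_trans (measureYU mu mD1 mD2 mS1 mS2) _.
by rewrite [e]splitr EFinD lteD.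
Qed.

Lemma approximable_bigsetU (F : (set X)^nat) n :
  (forall k, approximable (F k)) -> approximable (\big[setU/set0]_(i < n) F i).
Proof.
move=> Fapp; elim: n => [|n ih]; first by rewrite big_ord0; exact: approximable_set0.
by rewrite big_ord_recr; exact: approximable_setU.
Qed.

Lemma approximable_bigcup (F : (set X)^nat) :
  (forall k, approximable (F k)) -> approximable (\bigcup_k F k).
Proof.
move=> Fapp; have mF k : measurable (F k) by have [] := Fapp k.
have mU : measurable (\bigcup_k F k) by exact: bigcupT_measurable.
split => // e e0; have e2 : 0 < e / 2 by rewrite divr_gt0.
have [n tail_lt] := measure_bigsetU_tail mu_fin mF e2.
have [mT /(_ _ e2)[alpha AAalpha [D [mD Dsat] DT]]] := approximable_bigsetU n Fapp.
exists alpha => //; exists D => //.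
apply: le_lt_trans (measureY_triangle mu mD mT mU) _.
have TU : \big[setU/set0]_(i < n) F i `<=` \bigcup_k F k.
  by rewrite -bigcup_mkord => x [i _ Fix]; exists i.
rewrite [_ `+` \bigcup_k F k]setYC -[in X in \bigcup_k F k `+` X](setIidr TU) setYD.
by rewrite [e]splitr EFinD lteD.
Qed.

Lemma approximable_block alpha A : AA alpha -> alpha A -> approximable A.
Proof.
move=> AAalpha alphaA; have [_ AA_part _] := AA_dir.
have alphaP := AA_part _ AAalpha; have [_ alpha_meas _ _] := alphaP.
have [mA _] := alpha_meas _ alphaA.
split => // e e0; exists alpha => //; exists A; last by rewrite setYK measure0.
by split => //; exact: saturated_block.
Qed.

Lemma measurable_approximable : resolves AA -> forall S, measurable S -> approximable S.
Proof.
move=> AA_res S; rewrite -AA_res; apply: smallest_sub.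
  split; [exact: approximable_set0 | | exact: approximable_bigcup].
  by move=> A; rewrite setTD; exact: approximable_setC.
by move=> A [alpha AAalpha alphaA]; exact: approximable_block AAalpha alphaA.
Qed.

End approximation.

Section histogram.
Context d (X : measurableType d) (R : realType).
Variables (P Q : {finite_measure set X -> \bar R}) (L : R).

Let LQ_fin A : measurable A -> (L%:E * Q A)%E \is a fin_num.
Proof. by move=> mA; rewrite fin_numM ?fin_num_measure. Qed.

Lemma hist_distE alpha : is_partition alpha ->
  hist_dist P Q L alpha = (\sum_(A \in alpha) maxe (P A - L%:E * Q A) 0)%E.
Proof.
case=> _ alpha_meas _ _; apply: eq_fsbigr => A; rewrite inE => /alpha_meas[mA _].
by rewrite sube_mine ?fin_num_measure ?LQ_fin// gee0_abs// le_max lexx orbT.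
Qed.

Lemma fsum_excessE alpha : is_partition alpha ->
  (\sum_(A \in alpha) maxe (P A - L%:E * Q A) 0 =
   P setT - \sum_(A \in alpha) mine (P A) (L%:E * Q A))%E.
Proof.
move=> alphaP; have [alpha_fin alpha_meas _ _] := alphaP.
rewrite -(fsum_partition P alphaP) -fsumeB//; last first.
  move=> A /alpha_meas[mA _]; rewrite /Order.min.
  by case: ifP; rewrite ?fin_num_measure ?LQ_fin.
apply: eq_fsbigr => A; rewrite inE => /alpha_meas[mA _].
by rewrite sube_mine ?fin_num_measure ?LQ_fin.
Qed.

Definition excess_charge : {charge set X -> \bar R} :=
  cadd (charge_of_finite_measure P) (cscale (- L) (charge_of_finite_measure Q)).

Lemma excess_chargeE A : excess_charge A = (P A - L%:E * Q A)%E.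
Proof. by rewrite /= /cadd /= /cscale /= EFinN mulNe. Qed.

Hypothesis L_gt0 : 0 < L.
Variables (Pos N : set X).
Hypothesis PN : hahn_decomposition excess_charge Pos N.

Lemma measurable_hahn_pos : measurable Pos. Proof. by case: PN => -[]. Qed.
Lemma measurable_hahn_neg : measurable N. Proof. by case: PN => _ []. Qed.

Lemma hahn_pos A : measurable A -> (L%:E * Q (A `&` Pos) <= P (A `&` Pos))%E.
Proof.
move=> mA; have mAPos := measurableI _ _ mA measurable_hahn_pos.
have [[_ Pos_ge0] _ _ _] := PN; have := Pos_ge0 _ mAPos (@subIsetr _ _ _).
by rewrite excess_chargeE sube_ge0 ?fin_num_measure ?orbT.
Qed.

Lemma hahn_neg A : measurable A -> (P (A `&` N) <= L%:E * Q (A `&` N))%E.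
Proof.
move=> mA; have [_ [_ N_le0] _ _] := PN.
have := N_le0 _ (measurableI _ _ mA measurable_hahn_neg) (@subIsetr _ _ _).
by rewrite excess_chargeE sube_le0.
Qed.

Lemma measure_hahn_split (mu : {measure set X -> \bar R}) A : measurable A ->
  mu A = (mu (A `&` N) + mu (A `&` Pos))%E.
Proof.
move=> mA; have [_ _ PosN PosN0] := PN.
rewrite -measureU; first by rewrite -setIUr setUC PosN setIT.
- exact: measurableI _ _ mA measurable_hahn_neg.
- exact: measurableI _ _ mA measurable_hahn_pos.
- by rewrite setIACA setIid [N `&` _]setIC PosN0 setI0.
Qed.

Definition hahn_meet : {measure set X -> \bar R} :=
  measure_add (mrestr P measurable_hahn_neg)
    (mscale (NngNum (ltW L_gt0)) (mrestr Q measurable_hahn_pos)).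

Lemma hahn_meetE A : hahn_meet A = (P (A `&` N) + L%:E * Q (A `&` Pos))%E.
Proof. exact: measure_addE. Qed.

Lemma is_measure_meet_hahn : is_measure_meet P (fun A => L%:E * Q A)%E hahn_meet.
Proof.
split => [A mA|A mA|m m_P m_LQ A mA]; rewrite hahn_meetE.
- by rewrite [P A](measure_hahn_split P mA) leeD2l// hahn_pos.
- rewrite [Q A](measure_hahn_split Q mA) ge0_muleDr ?measure_ge0//.
  by rewrite leeD2r// hahn_neg.
- rewrite (measure_hahn_split m mA) leeD ?m_P ?m_LQ//.
  + exact: measurableI _ _ mA measurable_hahn_neg.
  + exact: measurableI _ _ mA measurable_hahn_pos.
Qed.

Variable AA : set (set (set X)).
Hypotheses (AA_dir : directed_partitions AA) (AA_res : resolves AA).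

Lemma fsum_mine_approx e : 0 < e -> exists2 alpha, AA alpha &
  (\sum_(A \in alpha) mine (P A) (L%:E * Q A) <= hahn_meet setT + e%:E)%E.
Proof.
move=> e0; have L1_gt0 : 0 < 1 + L by rewrite addr_gt0.
have PQ_fin : fin_num_fun (measure_add P Q).
  by move=> A mA; rewrite measure_addE fin_numD !fin_num_measure.
have mN := measurable_hahn_neg; have mPos := measurable_hahn_pos.
have [_ /(_ (e / (1 + L)))[|alpha AAalpha [D [mD Dsat] DN]]] :=
  measurable_approximable AA_dir PQ_fin AA_res mN; first by rewrite divr_gt0.
exists alpha => //; have [_ AA_part _] := AA_dir.
have := fsum_mine_le_saturated P (mscale (NngNum (ltW L_gt0)) Q) (AA_part _ AAalpha) mD Dsat.
move/le_trans; apply; rewrite /= /mscale /= hahn_meetE !setTI.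
have mY := measurableY mD mN.
have PD : (P D <= P N + P (D `+` N))%E.
  apply: le_trans (measureU2 P mN mY); apply: le_measure; rewrite ?inE//.
    exact: measurableU.
  by move=> x Dx /=; have := EM (N x); tauto.
have QD : (Q (~` D) <= Q Pos + Q (D `+` N))%E.
  apply: le_trans (measureU2 Q mPos mY); apply: le_measure; rewrite ?inE//.
  - exact: measurableC.
  - exact: measurableU.
  have [_ _ PosN _] := PN.
  move=> x /= nDx; have : (Pos `|` N) x by rewrite PosN.
  by move=> /=; tauto.
have err : (P (D `+` N) + L%:E * Q (D `+` N) <= e%:E)%E.
  have : (P (D `+` N) + Q (D `+` N) < (e / (1 + L))%:E)%E.
    by rewrite -measure_addE; exact: DN.
  rewrite -[P _]fineK ?fin_num_measure// -[Q _]fineK ?fin_num_measure//.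
  have := fine_ge0 (measure_ge0 P (D `+` N)); have := fine_ge0 (measure_ge0 Q (D `+` N)).
  move: (fine (P _)) (fine (Q _)) => p q q_ge0 p_ge0.
  rewrite -EFinD lte_fin ltr_pdivlMr// -EFinM -EFinD lee_fin => PQ_lt.
  have := mulr_ge0 (ltW L_gt0) p_ge0; nra.
apply: le_trans (leeD PD (lee_wpmul2l _ QD)) _; first by rewrite lee_fin ltW.
rewrite ge0_muleDr ?measure_ge0// addeACA leeD2l//.
Qed.

Lemma ereal_sup_fsum_excess (m : {measure set X -> \bar R}) :
  is_measure_meet P (fun A => L%:E * Q A)%E m ->
  ereal_sup [set x | exists2 alpha, AA alpha &
               x = (\sum_(A \in alpha) maxe (P A - L%:E * Q A) 0)%E] = (P setT - m setT)%E.
Proof.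
move=> [m_P m_LQ m_max]; have [_ AA_part _] := AA_dir.
set S := [set x | _]; apply/eqP; rewrite eq_le; apply/andP; split.
  apply: ge_ereal_sup => _ [alpha AAalpha ->].
  rewrite (fsum_excessE (AA_part _ AAalpha)); apply: (leeB (lexx _)).
  exact: measure_le_fsum_mine (AA_part _ AAalpha) _ _.
apply/lee_addgt0Pr => e /fsum_mine_approx[alpha AAalpha mine_le].
have meet_le : (hahn_meet setT <= m setT)%E.
  by apply: m_max measurableT; case: is_measure_meet_hahn.
have Salpha : S (\sum_(A \in alpha) maxe (P A - L%:E * Q A) 0)%E by exists alpha.
apply: le_trans (leeD2r e%:E (ereal_sup_ubound Salpha)).
rewrite (fsum_excessE (AA_part _ AAalpha)) -addeA -fin_num_oppeB//.
apply: (leeB (lexx _)); rewrite leeBlDr//.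
exact: le_trans mine_le (leeD2r _ meet_le).
Qed.

End histogram.

Theorem mainTheorem3 (R : realType) (T : ptopologicalType)
  (hT : hausdorff_space T)
  (AA : set (set (set (borel_space T))))
  (hdir : directed_partitions AA) (hres : resolves AA)
  (P Q : probability (borel_space T) R) (hPQ : P `<< Q)
  (L : R) (hL : 0 < L) :
  (exists m : {measure set (borel_space T) -> \bar R},
      is_measure_meet P (fun A => L%:E * Q A)%E m) /\
  forall m : {measure set (borel_space T) -> \bar R},
    is_measure_meet P (fun A => L%:E * Q A)%E m ->
    tv_dist P m = ereal_sup [set x | exists2 alpha, AA alpha & x = hist_dist P Q L alpha] /\
    ereal_sup [set x | exists2 alpha, AA alpha & x = hist_dist P Q L alpha] =
    ereal_sup [set x | exists2 alpha, AA alpha &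
                 x = (\sum_(A \in alpha) maxe (P A - L%:E * Q A) 0)%E].
Proof.
have [Pos [N PN]] := Hahn_decomposition (excess_charge P Q L).
split; first by exists (hahn_meet hL PN); exact: is_measure_meet_hahn.
move=> m m_meet; have [_ AA_part _] := hdir.
have -> : [set x | exists2 alpha, AA alpha & x = hist_dist P Q L alpha] =
          [set x | exists2 alpha, AA alpha &
                     x = (\sum_(A \in alpha) maxe (P A - L%:E * Q A) 0)%E].
  apply/seteqP; split => _ [alpha AAalpha ->]; exists alpha => //;
    by rewrite (hist_distE P Q L (AA_part _ AAalpha)).
rewrite (ereal_sup_fsum_excess hL PN hdir hres m_meet) tv_dist_dominated//.
by case: m_meet.
Qed.
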